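(* Let $K$ be a field of characteristic zero, $n\ge4$ even, and $\mathfrak{g}$ a filiform Lie algebra of dimension $n$ whose associated graded Lie algebra is isomorphic to $Q_n$; concretely, $\mathfrak{g}$ has an adapted basis $\{e_1,\dots,e_n\}$ in which $[e_i,e_{n+1-i}]=(-1)^ie_n$ for $2\le i\le n-1$. Then $\chi(\mathfrak{g})=2$.
   Context: A filiform Lie algebra of dimension $n$ is a nilpotent Lie algebra with $\dim\mathfrak{g}^k=n-k$ for $2\le k\le n$ (lower central series $\mathfrak{g}^1=\mathfrak{g}$, $\mathfrak{g}^{k+1}=[\mathfrak{g},\mathfrak{g}^k]$). An adapted basis is a basis $\{e_1,\dots,e_n\}$ with $[e_1,e_i]=e_{i+1}$ ($2\le i\le n-1$), $[e_1,e_n]=0$, $[e_2,e_3]\in\langle e_5,\dots,e_n\rangle$; for such a basis one has $[e_i,e_j]\in\langle e_{i+j},\dots,e_n\rangle$ if $i+j\le n$ and $[e_i,e_j]=0$ if $i+j>n+1$. For even $n$, $Q_n$ is the Lie algebra with basis $e_1,\dots,e_n$ and nonzero brackets $[e_1,e_i]=e_{i+1}$ ($2\le i\le n-1$) and $[e_i,e_{n+1-i}]=(-1)^ie_n$ ($2\le i\le n/2$). For $\ell\in\mathfrak{g}^*$, $\mathfrak{g}(\ell)=\{y\in\mathfrak{g}\mid\ell([x,y])=0\ \forall x\in\mathfrak{g}\}$ and $\chi(\mathfrak{g})=\min_{\ell\in\mathfrak{g}^*}\dim\mathfrak{g}(\ell)$. *)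

From HB Require Import structures.
From mathcomp Require Import all_boot all_order all_algebra.
Set Implicit Arguments. Unset Strict Implicit. Unset Printing Implicit Defensive.
Import Order.TTheory GRing.Theory Num.Theory.
Local Open Scope ring_scope.

Section LieDefs.
Variables (K : fieldType) (n : nat).
Local Notation V := 'rV[K]_n.

Definition is_lie_bracket (br : V -> V -> V) : Prop :=
  [/\ (forall (a : K) (x y z : V), br (a *: x + y) z = a *: br x z + br y z),
      (forall (a : K) (x y z : V), br z (a *: x + y) = a *: br z x + br z y),
      (forall x : V, br x x = 0) &
      (forall x y z : V, br x (br y z) + br y (br z x) + br z (br x y) = 0)].

Definition stdv (i : 'I_n) : V := delta_mx 0 i.

(* one step of the lower central series: S |-> [g, S], as a row space;
   spanned by the brackets of basis vectors of g with the rows of S *)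
Definition lcs_step (br : V -> V -> V) (S : 'M[K]_n) : 'M[K]_n :=
  (\sum_(i < n) \sum_(j < n) <<br (stdv i) (row j S)>>)%MS.

(* lcs br k = g^k  (g^1 = g, g^{k+1} = [g, g^k]); lcs br 0 = g as well *)
Definition lcs (br : V -> V -> V) (k : nat) : 'M[K]_n :=
  iter k.-1 (lcs_step br) 1%:M.

Definition filiform (br : V -> V -> V) : Prop :=
  forall k : nat, (2 <= k <= n)%N -> \rank (lcs br k) = (n - k)%N.

(* e : nat -> V, indexed from 1 : e_1, ..., e_n *)
Definition basis_mx (e : nat -> V) : 'M[K]_n := \matrix_(i < n) e i.+1.

(* span <e_m, ..., e_n> *)
Definition span_from (e : nat -> V) (m : nat) : 'M[K]_n :=
  \matrix_(i < n) (if (m <= i.+1)%N then e i.+1 else 0).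

Definition adapted_basis (br : V -> V -> V) (e : nat -> V) : Prop :=
  [/\ row_free (basis_mx e),
      (forall i : nat, (2 <= i <= n.-1)%N -> br (e 1%N) (e i) = e i.+1),
      br (e 1%N) (e n) = 0 &
      (br (e 2%N) (e 3%N) <= span_from e 5)%MS].

(* linear forms on g are represented by column vectors: l(v) = (v *m l) 0 0 *)
Definition app_form (l : 'cV[K]_n) (v : V) : K := (v *m l) 0 0.

(* U represents g(l) = { y | forall x, l([x,y]) = 0 } and has dimension d *)
Definition stab_dim (br : V -> V -> V) (l : 'cV[K]_n) (d : nat) : Prop :=
  exists U : 'M[K]_n,
    (forall y : V, (y <= U)%MS <-> (forall x : V, app_form l (br x y) = 0))
    /\ \rank U = d.

(* chi(g) = c : c is the minimum over l of dim g(l) *)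
Definition chi_is (br : V -> V -> V) (c : nat) : Prop :=
  (exists l : 'cV[K]_n, stab_dim br l c) /\
  (forall (l : 'cV[K]_n) (d : nat), stab_dim br l d -> (c <= d)%N).

End LieDefs.

(* For a linear form l, g(l) is the left kernel of the skew-symmetric matrix
   B_l = (l([e_j, e_i]))_(i,j), so dim g(l) = n - rank B_l.  Since e_n is central,
   every B_l has a nonzero kernel vector z; deleting a row and the matching column
   where z does not vanish loses no rank and leaves a skew matrix of odd size,
   which is singular in characteristic <> 2, so rank B_l <= n - 2.  Conversely,
   the Jacobi identity with e_1, starting from the central e_n and from
   [e_i, e_(n+1-i)] = +-e_n, gives [e_i, e_j] = 0 for i + j > n + 1; hence if
   l(e_n) <> 0, the block of B_l pairing e_(n-1), ..., e_2 with e_2, ..., e_(n-1)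
   is triangular with nonzero diagonal, and rank B_l = n - 2. *)

From HB Require Import structures.
From mathcomp Require Import all_boot all_order all_algebra zify.
Import Order.TTheory GRing.Theory Num.Theory.
Set Implicit Arguments. Unset Strict Implicit. Unset Printing Implicit Defensive.
Local Open Scope ring_scope.

Section SkewRank.
Variable F : fieldType.

Lemma row'_mulmx m n p (A : 'M[F]_(m, n)) (B : 'M_(n, p)) k :
  row' k (A *m B) = row' k A *m B.
Proof. by apply/matrixP => i j; rewrite !mxE; apply: eq_bigr => c _; rewrite mxE. Qed.

Lemma sub_row'_ker m n (A : 'M[F]_(m, n)) (z : 'rV_m) k :
  z 0 k != 0 -> z *m A = 0 -> (A <= row' k A)%MS.
Proof.
move=> zk zA.
have row_lift i : i != k -> (row i A <= row' k A)%MS.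
  case: (unliftP k i) => [i' -> _|-> /eqP//].
  by rewrite (_ : row _ _ = row i' (row' k A)) ?row_sub //; apply/rowP => j; rewrite !mxE.
apply/row_subP => i; have [-> | /row_lift //] := eqVneq i k.
have : \sum_i z 0 i *: row i A = 0 by rewrite -mulmx_sum_row.
rewrite (bigD1 k) //= => /eqP; rewrite addr_eq0 => /eqP/(congr1 ( *:%R (z 0 k)^-1)).
rewrite scalerA mulVf // scale1r => ->; rewrite scalerN -scaleN1r !scalemx_sub //.
by apply: summx_sub => j jk; rewrite scalemx_sub ?row_lift.
Qed.

Lemma mxrank_col'_ker m n (A : 'M[F]_(m, n)) (z : 'rV_n) k :
  z 0 k != 0 -> A *m z^T = 0 -> (\rank A <= \rank (col' k A))%N.
Proof.
move=> zk Az; rewrite -mxrank_tr -[\rank (col' k A)]mxrank_tr tr_col'.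
by apply/mxrankS/(sub_row'_ker zk); rewrite -[z]trmxK -trmx_mul Az trmx0.
Qed.

Lemma det_skew_odd m (A : 'M[F]_m) :
  (2%:R : F) != 0 -> odd m -> A^T = - A -> \det A = 0.
Proof.
move=> two m_odd skewA; apply/eqP; rewrite -(mulIr_eq0 _ (mulIf two)) mulr_natr mulr2n.
by rewrite -{1}det_tr skewA -scaleN1r detZ -signr_odd m_odd mulN1r addNr.
Qed.

Lemma mxrank_skew_ker m (A : 'M[F]_m) (z : 'rV_m) :
  (2%:R : F) != 0 -> ~~ odd m -> A^T = - A -> z != 0 -> z *m A = 0 ->
  (\rank A <= m - 2)%N.
Proof.
move=> two m_even skewA /rV0Pn[k zk] zA.
case: m => [|m] in A z k m_even skewA zk zA *; first by case: k zk.
pose A' := col' k (row' k A).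
have skewA' : A'^T = - A'.
  apply/matrixP => i j; rewrite !mxE.
  by have := congr1 (fun M : 'M_m.+1 => M (lift k i) (lift k j)) skewA; rewrite !mxE.
have Az : A *m z^T = 0 by rewrite -[A]opprK -skewA mulNmx -trmx_mul zA trmx0 oppr0.
have rankA : (\rank A <= \rank A')%N.
  apply: leq_trans (mxrankS (sub_row'_ker zk zA)) _.
  by apply: (mxrank_col'_ker zk); rewrite -row'_mulmx Az; apply/matrixP => i j; rewrite !mxE.
have A'_singular : ~~ row_free A'.
  by rewrite row_free_unit unitmxE (det_skew_odd two _ skewA') ?unitr0 //; apply/negPn.
have : (\rank A' < m)%N by rewrite ltn_neqAle A'_singular rank_leq_row.
lia.
Qed.

End SkewRank.

Lemma app_formZ (K : fieldType) n (l : 'cV[K]_n) a v :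
  app_form l (a *: v) = a * app_form l v.
Proof. by rewrite /app_form -scalemxAl mxE. Qed.

Lemma app_form0 (K : fieldType) n (l : 'cV[K]_n) : app_form l 0 = 0.
Proof. by rewrite /app_form mul0mx mxE. Qed.

Lemma app_form_delta (K : fieldType) n (v : 'rV[K]_n) k :
  app_form (delta_mx k 0) v = v 0 k.
Proof. by rewrite /app_form -colE mxE. Qed.

Section LieBracket.
Variables (K : fieldType) (n : nat) (br : 'rV[K]_n -> 'rV[K]_n -> 'rV[K]_n).
Hypothesis lie : is_lie_bracket br.

Definition br_linl (y : 'rV[K]_n) : {linear 'rV[K]_n -> 'rV[K]_n} :=
  HB.pack (br^~ y) (GRing.isLinear.Build K _ _ _ (br^~ y)
     (fun a x z => let: And4 linl _ _ _ := lie in linl a x z y)).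

Definition br_linr (x : 'rV[K]_n) : {linear 'rV[K]_n -> 'rV[K]_n} :=
  HB.pack (br x) (GRing.isLinear.Build K _ _ _ (br x)
     (fun a y z => let: And4 _ linr _ _ := lie in linr a y z x)).

Lemma brDl y : {morph br^~ y : x z / x + z}. Proof. exact: linearD (br_linl y). Qed.
Lemma brDr x : {morph br x : y z / y + z}. Proof. exact: linearD (br_linr x). Qed.
Lemma brZl a x y : br (a *: x) y = a *: br x y. Proof. exact: linearZZ (br_linl y) a x. Qed.
Lemma brZr a x y : br x (a *: y) = a *: br x y. Proof. exact: linearZZ (br_linr x) a y. Qed.
Lemma br0r x : br x 0 = 0. Proof. exact: raddf0 (br_linr x). Qed.
Lemma brNr x y : br x (- y) = - br x y. Proof. exact: (raddfN (br_linr x) y). Qed.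

Lemma br_suml I r (P : pred I) (F : I -> 'rV[K]_n) y :
  br (\sum_(i <- r | P i) F i) y = \sum_(i <- r | P i) br (F i) y.
Proof. exact: (raddf_sum (br_linl y) r P F). Qed.

Lemma br_sumr x I r (P : pred I) (F : I -> 'rV[K]_n) :
  br x (\sum_(i <- r | P i) F i) = \sum_(i <- r | P i) br x (F i).
Proof. exact: (raddf_sum (br_linr x) r P F). Qed.

Lemma brC x y : br x y = - br y x.
Proof.
case: (lie) => _ _ brxx _; have := brxx (x + y).
by rewrite brDl !brDr !brxx add0r addr0 => /eqP; rewrite addr_eq0 => /eqP.
Qed.

Definition form_mx (l : 'cV[K]_n) : 'M[K]_n :=
  \matrix_(i, j) app_form l (br (stdv K j) (stdv K i)).

Lemma app_form_br l x y : app_form l (br x y) = (y *m form_mx l *m x^T) 0 0.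
Proof.
have -> : br x y = \sum_j \sum_i (x 0 j * y 0 i) *: br (stdv K j) (stdv K i).
  rewrite {1}(row_sum_delta x) br_suml; apply: eq_bigr => j _.
  rewrite {1}(row_sum_delta y) brZl br_sumr scaler_sumr; apply: eq_bigr => i _.
  by rewrite brZr scalerA.
rewrite /app_form mulmx_suml summxE !mxE; apply: eq_bigr => j _.
rewrite mulmx_suml summxE !mxE mulr_suml; apply: eq_bigr => i _.
by rewrite -scalemxAl !mxE /app_form mxE [RHS]mulrC mulrA.
Qed.

Lemma form_mx_kerP l y :
  (forall x, app_form l (br x y) = 0) <-> y *m form_mx l = 0.
Proof.
split=> [yB0 | yB0 x]; last by rewrite app_form_br yB0 !mul0mx mxE.
apply/rowP => j; have := yB0 (stdv K j).
by rewrite app_form_br /stdv trmx_delta -colE mxE => ->; rewrite mxE.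
Qed.

Lemma stab_dimP l d : stab_dim br l d <-> d = (n - \rank (form_mx l))%N.
Proof.
rewrite -mxrank_ker; split => [[U [UP <-]] | ->].
  apply/eqmx_rank/andP; split; apply/row_subP => i.
    by rewrite sub_kermx; apply/eqP/form_mx_kerP/UP/row_sub.
  by apply/UP/form_mx_kerP; rewrite -row_mul mulmx_ker row0.
exists (kermx (form_mx l)); split => // y.
by rewrite sub_kermx; split => [/eqP/form_mx_kerP | /form_mx_kerP/eqP].
Qed.

Lemma form_mx_skew l : (form_mx l)^T = - form_mx l.
Proof. by apply/matrixP => i j; rewrite !mxE brC /app_form mulNmx mxE. Qed.

Lemma form_mx_entry p q (M : 'M_(p, n)) (N : 'M_(q, n)) l a b :
  (M *m form_mx l *m N^T) a b = app_form l (br (row b N) (row a M)).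
Proof.
rewrite app_form_br !mxE; apply: eq_bigr => c _; rewrite !mxE; congr (_ * _).
by apply: eq_bigr => d _; rewrite !mxE.
Qed.

Lemma lcs_succ k : (0 < k)%N -> lcs br k.+1 = lcs_step br (lcs br k).
Proof. by case: k. Qed.

Lemma lcs_step_sub S x y : (x <= S)%MS -> (br y x <= lcs_step br S)%MS.
Proof.
move/submxP => [u ->]; rewrite mulmx_sum_row (row_sum_delta y) br_suml.
apply: summx_sub => i _; rewrite brZl br_sumr scaler_sumr.
apply: summx_sub => j _; rewrite brZr scalerA scalemx_sub //.
by apply: (sumsmx_sup i) => //; apply: (sumsmx_sup j) => //; rewrite genmxE.
Qed.

Variable e : nat -> 'rV[K]_n.
Hypothesis adapt : adapted_basis br e.

Lemma e_sub_lcs k : (1 <= k <= n.-1)%N -> (e k.+1 <= lcs br k)%MS.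
Proof.
case: adapt => _ br_e1 _ _.
elim: k => [//|[|k] IH] /andP[_ k_lt]; first by rewrite submx1.
by rewrite lcs_succ // -br_e1 ?lcs_step_sub ?IH //; lia.
Qed.

Hypothesis fil : filiform br.

Lemma br_e_last x : (2 <= n)%N -> br x (e n) = 0.
Proof.
move=> n_ge2; have lcs_n : lcs br n = 0.
  by apply/eqP; rewrite -mxrank_eq0 fil ?subnn // n_ge2 leqnn.
have e_n_sub : (e n <= lcs br n.-1)%MS.
  by have := e_sub_lcs (k := n.-1); rewrite prednK; [apply; lia | lia].
have := lcs_step_sub x e_n_sub.
by rewrite -lcs_succ ?prednK ?lcs_n ?submx0; [move/eqP | lia | lia].
Qed.

Lemma br_e1_jacobi i j : (2 <= i <= n.-1)%N -> (2 <= j <= n.-1)%N ->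
  br (e 1) (br (e i) (e j)) = br (e i) (e j.+1) + br (e i.+1) (e j).
Proof.
case: (lie) (adapt) => _ _ _ jacobi [_ br_e1 _ _] i_in j_in.
have := jacobi (e 1) (e i) (e j).
rewrite (brC (e j)) br_e1 // brNr br_e1 // (brC (e j)).
by move/eqP; rewrite -addrA -opprD subr_eq0 => /eqP.
Qed.

Hypothesis Qbr : forall i : nat, (2 <= i <= n.-1)%N ->
  br (e i) (e (n.+1 - i)%N) = (-1) ^+ i *: e n.

Lemma br_e_vanish_step s : (n + 2 <= s)%N ->
  (forall i j, (2 <= i <= n)%N -> (2 <= j <= n)%N -> (i + j)%N = s.-1 ->
     br (e 1) (br (e i) (e j)) = 0) ->
  forall i j, (2 <= i <= n)%N -> (2 <= j <= n)%N -> (i + j)%N = s ->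
    br (e i) (e j) = 0.
Proof.
move=> s_ge inner.
suff vanish t i j : (n - j)%N = t -> (2 <= i <= n)%N -> (2 <= j <= n)%N ->
    (i + j)%N = s -> br (e i) (e j) = 0 by move=> i j; apply: vanish.
elim: t i j => [|t IH] i j Dt i_in j_in ij.
  by rewrite (_ : j = n) ?br_e_last //; lia.
have := br_e1_jacobi (i := i.-1) (j := j) ltac:(lia) ltac:(lia).
by rewrite inner ?(IH i.-1 j.+1) ?add0r ?prednK //; lia.
Qed.

Lemma br_e_vanish i j : (2 <= i <= n)%N -> (2 <= j <= n)%N ->
  (n + 2 <= i + j)%N -> br (e i) (e j) = 0.
Proof.
move=> + + /subnK/esym; move: (i + j - (n + 2))%N => d.
elim: d i j => [|d IH]; apply: br_e_vanish_step; rewrite ?leq_addl // => i j i_in j_in ij.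
  by rewrite (_ : j = n.+1 - i)%N ?Qbr ?brZr ?br_e_last ?scaler0 //; lia.
by rewrite IH ?br0r //; lia.
Qed.

Lemma e_neq0 i : (1 <= i <= n)%N -> e i != 0.
Proof.
case: adapt => free _ _ _ i_in; have lt_i : (i.-1 < n)%N by lia.
apply: contraNneq (oner_neq0 K) => e_i0.
have : (delta_mx 0 (Ordinal lt_i) : 'rV_n) *m basis_mx e = 0.
  by rewrite -rowE rowK /= prednK ?e_i0 //; lia.
rewrite -(mul0mx 1 (basis_mx e)) => /(row_free_inj free)/matrixP/(_ 0 (Ordinal lt_i)).
by rewrite !mxE !eqxx => /eqP.
Qed.

Lemma form_mx_rank_ge l : (2 <= n)%N -> app_form l (e n) != 0 ->
  (n - 2 <= \rank (form_mx l))%N.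
Proof.
move=> n_ge2 l_en.
pose P : 'M[K]_(n - 2, n) := \matrix_a e (n - 1 - a)%N.
pose Q : 'M[K]_(n - 2, n) := \matrix_b e (b + 2)%N.
have entry a b : (P *m form_mx l *m Q^T) a b =
    app_form l (br (e (b + 2)%N) (e (n - 1 - a)%N)).
  by rewrite form_mx_entry !rowK.
have trig : is_trig_mx (P *m form_mx l *m Q^T).
  apply/is_trig_mxP => a b ab; move: (ltn_ord a) (ltn_ord b) => a_lt b_lt.
  by rewrite entry br_e_vanish ?app_form0 //; lia.
have unit : P *m form_mx l *m Q^T \in unitmx.
  rewrite unitmxE (det_trig trig) unitfE; apply/prodf_neq0 => a _; move: (ltn_ord a) => a_lt.
  rewrite entry (_ : n - 1 - a = n.+1 - (a + 2))%N ?Qbr ?app_formZ ?mulf_neq0 ?signr_eq0 //; lia.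
rewrite -(mxrank_unit unit).
exact: leq_trans (mxrankM_maxl _ _) (mxrankM_maxr _ _).
Qed.

End LieBracket.

Unset Implicit Arguments. Set Strict Implicit. Set Printing Implicit Defensive.

Theorem proposition6p9 (K : fieldType) (n : nat)
  (charK0 : [pchar K] =i pred0)
  (n_ge4 : (4 <= n)%N) (n_even : ~~ odd n)
  (br : 'rV[K]_n -> 'rV[K]_n -> 'rV[K]_n)
  (lie : is_lie_bracket br)
  (fil : filiform br)
  (e : nat -> 'rV[K]_n)
  (adapt : adapted_basis br e)
  (Qbr : forall i : nat, (2 <= i <= n.-1)%N ->
           br (e i) (e (n.+1 - i)%N) = (-1) ^+ i *: e n) :
  chi_is br 2.
Proof.
have two : (2%:R : K) != 0 by move/pcharf0P: charK0 => ->.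
have n_ge2 : (2 <= n)%N by lia.
have e_n_neq0 : e n != 0 by apply: (e_neq0 adapt); lia.
have rank_le l : (\rank (form_mx br l) <= n - 2)%N.
  apply: (mxrank_skew_ker two n_even (form_mx_skew lie l) e_n_neq0).
  by apply/(form_mx_kerP lie) => x; rewrite (br_e_last lie adapt fil) ?app_form0.
have [k e_nk] := rV0Pn _ e_n_neq0.
have l_en : app_form (delta_mx k 0) (e n) != 0 by rewrite app_form_delta.
split.
  exists (delta_mx k 0); apply/(stab_dimP lie).
  have := form_mx_rank_ge lie adapt fil Qbr n_ge2 l_en.
  by have := rank_le (delta_mx k 0); lia.
move=> l d /(stab_dimP lie) ->.
by have := rank_le l; have := rank_leq_row (form_mx br l); lia.
Qed.
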